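(* Let $\sigma$ and $\sigma''$ be density matrices on $\mathcal{H}$ with the same support. Then $d(\sigma'')=d(\sigma)$.
   Context: $\mathcal{H}=\mathcal{H}_1\otimes\cdots\otimes\mathcal{H}_m$ is finite-dimensional. A positive semidefinite operator is separable if it is a nonnegative combination of tensor products of positive semidefinite operators on the $\mathcal{H}_k$. The support of a density matrix is the span of its eigenvectors with nonzero eigenvalues. For a density matrix $\sigma$, $d(\sigma):=\min \mathrm{Tr}(\Pi)/\mathrm{Tr}(\sigma\Pi)$ over separable positive semidefinite operators $\Pi$ with $\mathrm{Tr}(\sigma\Pi)>0$ and $0\le \Pi/\mathrm{Tr}(\sigma\Pi)\le I$ (equivalently, $\min\mathrm{Tr}\,\Pi'$ over separable $\Pi'$ with $0\le\Pi'\le I$ and $\mathrm{Tr}(\sigma\Pi')=1$). *)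

(* Complex numbers: an arbitrary numClosedFieldType C
   (e.g. algC); operators on a d-dimensional space are 'M[C]_d. *)
From HB Require Import structures.
From mathcomp Require Import all_boot all_order all_algebra.
Set Implicit Arguments. Unset Strict Implicit. Unset Printing Implicit Defensive.
Import Order.TTheory GRing.Theory Num.Theory.
Local Open Scope ring_scope.

Section Defs.
Variable C : numClosedFieldType.

Definition adjmx m n (A : 'M[C]_(m, n)) : 'M[C]_(n, m) := (map_mx Num.conj A)^T.

Definition hermitian n (A : 'M[C]_n) : Prop := adjmx A = A.

Definition psd n (A : 'M[C]_n) : Prop :=
  hermitian A /\ forall v : 'cV[C]_n, 0 <= (adjmx v *m A *m v) 0 0.

Definition density n (A : 'M[C]_n) : Prop := psd A /\ \tr A = 1.

Definition pair_idx m n (k : 'I_(m * n)) : 'I_m * 'I_n :=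
  enum_val (cast_ord (esym (@mxvec_cast m n)) k).

Definition kron m1 n1 m2 n2 (A : 'M[C]_(m1, n1)) (B : 'M[C]_(m2, n2))
  : 'M[C]_(m1 * m2, n1 * n2) :=
  \matrix_(k, l) (A (pair_idx k).1 (pair_idx l).1 * B (pair_idx k).2 (pair_idx l).2).

(* total dimension of H_1 (x) ... (x) H_m with dim H_k = ds_k *)
Definition tdim (ds : seq nat) : nat := foldr muln 1%N ds.

(* M = A_1 (x) ... (x) A_m with every A_k psd on H_k *)
Fixpoint prod_psd (ds : seq nat) : 'M[C]_(tdim ds) -> Prop :=
  match ds return 'M[C]_(tdim ds) -> Prop with
  | [::] => fun M => M = 1%:M
  | d :: ds' => fun M => exists (A : 'M[C]_d) (B : 'M[C]_(tdim ds')),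
      psd A /\ @prod_psd ds' B /\ M = kron A B
  end.

Definition separable (ds : seq nat) (P : 'M[C]_(tdim ds)) : Prop :=
  psd P /\ exists (k : nat) (c : 'I_k -> C) (M : 'I_k -> 'M[C]_(tdim ds)),
    (forall i, 0 <= c i /\ @prod_psd ds (M i)) /\ P = \sum_(i < k) c i *: M i.

(* x lies in the support of s: the span of eigenvectors with nonzero eigenvalues *)
Definition in_support n (s : 'M[C]_n) (x : 'cV[C]_n) : Prop :=
  exists (k : nat) (a : 'I_k -> C) (v : 'I_k -> 'cV[C]_n) (c : 'I_k -> C),
    (forall i, a i != 0 /\ s *m v i = a i *: v i) /\ x = \sum_(i < k) c i *: v i.

(* t is a value Tr(P)/Tr(sP) attained by a feasible P in the definition of d(s) *)
Definition d_feasible (ds : seq nat) (s : 'M[C]_(tdim ds)) (t : C) : Prop :=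
  exists P : 'M[C]_(tdim ds),
    separable P /\ 0 < \tr (s *m P) /\
    psd ((\tr (s *m P))^-1 *: P) /\ psd (1%:M - (\tr (s *m P))^-1 *: P) /\
    t = \tr P / \tr (s *m P).

(* t = d(s): t is the minimum of the feasible values *)
Definition is_d (ds : seq nat) (s : 'M[C]_(tdim ds)) (t : C) : Prop :=
  d_feasible s t /\ forall t', d_feasible s t' -> t <= t'.

End Defs.

From Pilot Require Import Defs.
From HB Require Import structures.
From mathcomp Require Import all_boot all_order all_algebra.
From mathcomp Require Import spectral.
Set Implicit Arguments. Unset Strict Implicit. Unset Printing Implicit Defensive.
Import Order.TTheory GRing.Theory Num.Theory.
Local Open Scope ring_scope.

(* Write P' = P / Tr(sP) for a feasible P in the definition of
   d(s): then d(s) is the minimum of Tr P' over separable P' with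
   0 <= P' <= I and Tr(s P') = 1 (lemma [d_feasibleP]).  The constraint
   Tr(s P') = 1 only depends on the support of s: with R = I - P' >= 0 it
   reads Tr(s R) = 0, and for psd s, R this holds iff R s = 0, i.e. iff R
   annihilates the support of s (lemmas [psd_trace_mul_eq0] and
   [annihilator_support]).  Hence two density matrices with the same support
   have the same feasible values, so the same minimum. *)

Section SpectralFacts.
Variable C : numClosedFieldType.

Lemma adjmxE m n (A : 'M[C]_(m, n)) : adjmx A = map_mx Num.conj A^T.
Proof. by rewrite /adjmx map_trmx. Qed.

Lemma adjmxM m n p (A : 'M[C]_(m, n)) (B : 'M[C]_(n, p)) :
  adjmx (A *m B) = adjmx B *m adjmx A.
Proof. by rewrite /adjmx map_mxM trmx_mul. Qed.

Lemma adjmxK m n (A : 'M[C]_(m, n)) : adjmx (adjmx A) = A.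
Proof. by rewrite !adjmxE; apply: trmxCK. Qed.

Lemma adjmx_col n (X : 'M[C]_n) i : adjmx (col i X) = row i (adjmx X).
Proof. by apply/matrixP => a b; rewrite !mxE. Qed.

(* Spectral theorem: a Hermitian A is unitarily diagonalisable, A = U* D U.
   ([Defs.hermitian] is qualified since [spectral] exports its own notion.) *)
Lemma hermitian_spectral n (A : 'M[C]_n) : Defs.hermitian A ->
  exists (U : 'M[C]_n) (D : 'rV[C]_n),
  U *m adjmx U = 1%:M /\ A = adjmx U *m diag_mx D *m U.
Proof.
move=> hA; have /orthomx_spectralP eA : A \is normalmx.
  by apply/normalmxP; rewrite -adjmxE hA.
have unitU := spectral_unitarymx A.
have invU : invmx (spectralmx A) = adjmx (spectralmx A).
  by rewrite adjmxE invmx_unitary.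
exists (spectralmx A), (spectral_diag A); split; last by rewrite -invU.
by rewrite adjmxE; apply/unitarymxP.
Qed.

(* The columns of U* are the eigenvectors: their quadratic forms are the
   diagonal entries of the conjugated matrix U M U*. *)
Lemma quad_form_eigencol n (U M : 'M[C]_n) i :
  (adjmx (col i (adjmx U)) *m M *m col i (adjmx U)) 0 0 = (U *m M *m adjmx U) i i.
Proof.
by rewrite adjmx_col adjmxK -row_mul !mxE; apply: eq_bigr => k _; rewrite !mxE.
Qed.

Lemma mul_eigencol n (M U : 'M[C]_n) i a :
  (M *m col i (adjmx U)) a 0 = (M *m adjmx U) a i.
Proof. by rewrite !mxE; apply: eq_bigr => k _; rewrite !mxE. Qed.

Lemma psd_eigen_ge0 n (A U : 'M[C]_n) (D : 'rV[C]_n) :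
  psd A -> U *m adjmx U = 1%:M -> A = adjmx U *m diag_mx D *m U ->
  forall i, 0 <= D 0 i.
Proof.
move=> [_ qA] UU eA i.
have -> : D 0 i = (U *m A *m adjmx U) i i.
  by rewrite eA !mulmxA UU mul1mx -mulmxA UU mulmx1 !mxE eqxx mulr1n.
by rewrite -quad_form_eigencol; apply: qA.
Qed.

Lemma kill_eigencols n (A R U : 'M[C]_n) (D : 'rV[C]_n) :
  A = adjmx U *m diag_mx D *m U ->
  (forall i, D 0 i != 0 -> R *m col i (adjmx U) = 0) -> R *m A = 0.
Proof.
move=> -> kill; rewrite !mulmxA.
suff -> : R *m adjmx U *m diag_mx D = 0 by rewrite mul0mx.
apply/matrixP => a b; rewrite mul_mx_diag mxE [RHS]mxE.
have [->|nz] := eqVneq (D 0 b) 0; first by rewrite mulr0.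
by rewrite -mul_eigencol kill // mxE mul0r.
Qed.

End SpectralFacts.

Section PsdSupport.
Variable C : numClosedFieldType.

Lemma psdZ n (a : C) (P : 'M[C]_n) : 0 <= a -> psd P -> psd (a *: P).
Proof.
move=> a0 [hP qP]; split.
  by rewrite /Defs.hermitian /adjmx map_mxZ linearZ /= geC0_conj // -/(adjmx P) hP.
by move=> v; rewrite -scalemxAr -scalemxAl mxE mulr_ge0.
Qed.

Lemma psd_quad_eq0 n (R : 'M[C]_n) (v : 'cV[C]_n) :
  psd R -> (adjmx v *m R *m v) 0 0 = 0 -> R *m v = 0.
Proof.
move=> pR; have [U [D [UU eR]]] := hermitian_spectral pR.1.
have D_ge0 := psd_eigen_ge0 pR UU eR; set y := U *m v.
have -> : adjmx v *m R *m v = adjmx y *m diag_mx D *m y.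
  by rewrite eR /y adjmxM !mulmxA.
move=> q0; have sum0 : \sum_i D 0 i * (y i 0 * Num.conj (y i 0)) = 0.
  rewrite -[RHS]q0 mxE; apply: eq_bigr => i _; rewrite mul_mx_diag !mxE.
  by rewrite mulrC [RHS]mulrC mulrA.
have term0 i : D 0 i * (y i 0 * Num.conj (y i 0)) = 0.
  apply: (psumr_eq0P (P := xpredT) _ sum0) => // k _.
  exact: mulr_ge0 (D_ge0 k) (mul_conjC_ge0 _).
suff Dy0 : diag_mx D *m y = 0 by rewrite eR -mulmxA -/y -mulmxA Dy0 mulmx0.
apply/matrixP => i j; rewrite mul_diag_mx mxE [RHS]mxE (ord1 j).
by move/eqP: (term0 i); rewrite mulf_eq0 mul_conjC_eq0 => /orP[] /eqP ->;
  rewrite ?mul0r ?mulr0.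
Qed.

Lemma psd_trace_mul_eq0 n (A R : 'M[C]_n) :
  psd A -> psd R -> \tr (A *m R) = 0 -> R *m A = 0.
Proof.
move=> pA pR tr0; have [U [D [UU eA]]] := hermitian_spectral pA.1.
have D_ge0 := psd_eigen_ge0 pA UU eA; set M := U *m R *m adjmx U.
have M_ge0 i : 0 <= M i i by rewrite /M -quad_form_eigencol; apply: pR.2.
have sum0 : \sum_i D 0 i * M i i = 0.
  have trD : \tr (A *m R) = \tr (diag_mx D *m M).
    by rewrite eA /M -!mulmxA mxtrace_mulC !mulmxA.
  by rewrite -[RHS]tr0 trD /mxtrace; apply: eq_bigr => i _; rewrite mul_diag_mx [RHS]mxE.
apply: (kill_eigencols eA) => i Di; apply: psd_quad_eq0 => //.
rewrite quad_form_eigencol -/M.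
have := psumr_eq0P (P := xpredT) (fun k _ => mulr_ge0 (D_ge0 k) (M_ge0 k)) sum0.
by move/(_ i isT)/eqP; rewrite mulf_eq0 (negbTE Di) => /eqP.
Qed.

Lemma annihilator_support n (A R : 'M[C]_n) : Defs.hermitian A ->
  R *m A = 0 <-> forall x, in_support A x -> R *m x = 0.
Proof.
move=> hA; split.
  move=> RA x [k [a [v [c [eig ->]]]]]; rewrite mulmx_sumr big1 // => i _.
  have [ai_nz Avi] := eig i.
  have -> : v i = (a i)^-1 *: (A *m v i) by rewrite Avi scalerA mulVf ?scale1r.
  by rewrite !scalemxAr mulmxA RA mul0mx.
have [U [D [UU eA]]] := hermitian_spectral hA.
move=> kill; apply: (kill_eigencols eA) => i Di; apply: kill.
exists 1%N, (fun _ => D 0 i), (fun _ => col i (adjmx U)), (fun _ => 1).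
split=> [_|]; last by rewrite big_ord1 scale1r.
split=> //; apply/matrixP => a b; rewrite (ord1 b) mul_eigencol.
have -> : A *m adjmx U = adjmx U *m diag_mx D by rewrite eA -!mulmxA UU mulmx1.
by rewrite mul_mx_diag !mxE mulrC.
Qed.

Lemma trace_one_same_support n (s s'' Q : 'M[C]_n) :
  density s -> density s'' ->
  (forall x, in_support s x <-> in_support s'' x) ->
  psd (1%:M - Q) -> \tr (s *m Q) = 1 -> \tr (s'' *m Q) = 1.
Proof.
move=> [ps trs] [ps'' trs''] same_supp pR trQ.
have trB (t : 'M[C]_n) : \tr (t *m (1%:M - Q)) = \tr t - \tr (t *m Q).
  by rewrite mulmxBr mulmx1 raddfB.
have /(psd_trace_mul_eq0 ps pR) Rs : \tr (s *m (1%:M - Q)) = 0.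
  by rewrite trB trs trQ subrr.
have /(annihilator_support _ ps''.1) Rs'' : forall x, in_support s'' x ->
    (1%:M - Q) *m x = 0.
  by move=> x /same_supp; apply: (annihilator_support _ ps.1).1 Rs x.
apply/eqP; rewrite -trs'' eq_sym -subr_eq0 -trB.
by rewrite mxtrace_mulC Rs'' mxtrace0.
Qed.

End PsdSupport.

Section Feasibility.
Variable C : numClosedFieldType.
Variable ds : seq nat.

Lemma separableZ (a : C) (P : 'M[C]_(tdim ds)) :
  0 <= a -> separable P -> separable (a *: P).
Proof.
move=> a0 [pP [k [c [M [cM eP]]]]]; split; first exact: psdZ a0 pP.
exists k, (fun i => a * c i), M; split.
  by move=> i; have [ci Mi] := cM i; split=> //; apply: mulr_ge0.
by rewrite eP scaler_sumr; apply: eq_bigr => i _; rewrite scalerA.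
Qed.

Lemma d_feasibleP (s : 'M[C]_(tdim ds)) (t : C) :
  d_feasible s t <-> exists Q : 'M[C]_(tdim ds),
    [/\ separable Q, psd (1%:M - Q), \tr (s *m Q) = 1 & t = \tr Q].
Proof.
split=> [[P [sepP [tr_gt0 [_ [pR ->]]]]] | [Q [sepQ pR trQ ->]]].
  exists ((\tr (s *m P))^-1 *: P); split=> //.
  - by apply: separableZ sepP; rewrite invr_ge0 ltW.
  - by rewrite -scalemxAr mxtraceZ mulVf // gt_eqF.
  - by rewrite mxtraceZ mulrC.
exists Q; rewrite trQ invr1 scale1r; split=> //; split; first exact: ltr01.
by rewrite mulr1; split=> //; case: sepQ.
Qed.

Lemma d_feasible_same_support (s s'' : 'M[C]_(tdim ds)) (t : C) :
  density s -> density s'' ->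
  (forall x, in_support s x <-> in_support s'' x) ->
  d_feasible s t -> d_feasible s'' t.
Proof.
move=> dens dens'' same_supp /d_feasibleP [Q [sepQ pR trQ ->]].
apply/d_feasibleP; exists Q; split=> //.
exact: (trace_one_same_support dens dens'' same_supp).
Qed.

End Feasibility.

Theorem mainTheorem8 (C : numClosedFieldType) (ds : seq nat)
  (s s'' : 'M[C]_(tdim ds)) :
  density s -> density s'' ->
  (forall x, in_support s x <-> in_support s'' x) ->
  forall t : C, is_d s t <-> is_d s'' t.
Proof.
move=> dens dens'' same_supp.
have feas_iff t : d_feasible s t <-> d_feasible s'' t.
  split; first exact: d_feasible_same_support.
  by apply: d_feasible_same_support => // x; split=> /same_supp.
move=> t; split=> -[/feas_iff ft min]; split=> // t' /feas_iff; exact: min.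
Qed.
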